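(* Let $(E,\mathscr T)$ be a stable locally $L^0$-convex module with $\mathrm{supp}(E)>0$. Then $E$ is anti-compact (every subset of $E$ that is compact for $\mathscr T$ in the usual sense is finite) if and only if $\mathrm{supp}(E)$ is atomless (contains no atom of $\mathbb P$).
   Context: $(\Omega,\mathcal F,\mathbb P)$ is a probability space, $L^0$ the real-valued measurable functions modulo a.e. equality (a.e. order), $L^0_+=\{r\ge0\}$, $L^0_{++}=\{r>0\text{ a.e.}\}$; measurable sets are identified modulo null sets. An $L^0$-module $E$ is stable if for every countable measurable partition $(A_k)$ of $\Omega$ and $(x_k)\subset E$ there is a unique $x=\sum_k1_{A_k}x_k\in E$ with $1_{A_k}x=1_{A_k}x_k$ for all $k$. The support of $E$ is $\mathrm{supp}(E)=\bigwedge\{A:1_{A^c}E=\{0\}\}$ (essential infimum of measurable sets). An $L^0$-seminorm is $p:E\to L^0_+$ with $p(rx)=|r|p(x)$, $p(x+y)\le p(x)+p(y)$. A collection $\mathscr P$ of seminorms is stable if nonempty and $\sum_k1_{A_k}p_k\in\mathscr P$ (the seminorm $x\mapsto\sum_k1_{A_k}p_k(x)$) for all $(p_k)\subset\mathscr P$ and countable measurable partitions $(A_k)$; it is separated if $\sup_{p\in\mathscr P}p(x)=0$ implies $x=0$. Let $L^0_s(\mathbb N)$ be the set of step functions $n=\sum_k1_{A_k}n_k$ ($n_k\in\mathbb N$, $(A_k)$ countable measurable partition). A subset $\mathscr N\subset\mathscr P$ is stable finite if $\mathscr N=\{\sum_k 1_{A_k}q_k: q_k\in\mathrm{st}(\mathscr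 N_k)\}$ for some countable measurable partition $(A_k)$ and finite nonempty $\mathscr N_k\subset\mathscr P$, where $\mathrm{st}(\mathscr N_k)$ is the set of all $\sum_j1_{B_j}p_j$ with $p_j\in\mathscr N_k$ and $(B_j)$ a countable measurable partition. A stable locally $L^0$-convex module is a stable $L^0$-module $E$ with the topology $\mathscr T=\mathscr T_s(\mathscr P)$ for a stable separated collection $\mathscr P$ of $L^0$-seminorms, i.e. the topology generated by the base of sets $\{y\in E:\sup_{p\in\mathscr N}p(x-y)<r\}$ with $x\in E$, $r\in L^0_{++}$ and $\mathscr N\subset\mathscr P$ stable finite. *)

From HB Require Import structures.
From mathcomp Require Import all_boot all_order all_algebra.
From mathcomp Require Import all_classical all_reals all_analysis.
Set Implicit Arguments. Unset Strict Implicit. Unset Printing Implicit Defensive.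
Import Order.TTheory GRing.Theory Num.Theory.
Local Open Scope classical_set_scope.
Local Open Scope ring_scope.

(* L^0 elements are represented by measurable functions
   Omega -> R; all (in)equalities between them are understood P-a.e.
   An L^0-module is a zmodType E with an action [smul] of measurable
   functions which only depends on the a.e.-class of the scalar. *)

Section L0.
Context (d : measure_display) (Omega : measurableType d) (R : realType)
        (P : probability Omega R).

Definition L0_meas (f : Omega -> R) := measurable_fun setT f.

Definition aeq (f g : Omega -> R) := {ae P, forall w, f w = g w}.
Definition ale (f g : Omega -> R) := {ae P, forall w, f w <= g w}.
Definition alt (f g : Omega -> R) := {ae P, forall w, f w < g w}.

(* countable measurable partition of Omega (finite ones: pad with set0) *)
Definition mpartition (A : nat -> set Omega) :=
  (forall k, measurable (A k)) /\ trivIset setT A /\ \bigcup_k A k = setT.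

(* gluing sum_k 1_{A_k} f_k, for a partition A *)
Definition glue (A : nat -> set Omega) (f : nat -> Omega -> R) : Omega -> R :=
  fun w => f (xget 0%N [set k | A k w]) w.

Section Module.
Context (E : zmodType) (smul : (Omega -> R) -> E -> E).

Definition L0module :=
  [/\ (forall r x y, L0_meas r -> smul r (x + y) = smul r x + smul r y),
      (forall r s x, L0_meas r -> L0_meas s -> smul (r \+ s) x = smul r x + smul s x),
      (forall r s x, L0_meas r -> L0_meas s -> smul (r \* s) x = smul r (smul s x)),
      (forall x, smul (cst 1) x = x) &
      (forall r s x, L0_meas r -> L0_meas s -> aeq r s -> smul r x = smul s x)].

Definition stable_module :=
  forall (A : nat -> set Omega) (xs : nat -> E), mpartition A ->
    exists! x : E, forall k, smul (\1_(A k)) x = smul (\1_(A k)) (xs k).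

(* S is (a representative of) supp(E) = ess.inf {A : 1_{A^c} E = {0}} *)
Definition annihilating (A : set Omega) :=
  measurable A /\ forall x : E, smul (\1_(~` A)) x = 0.

Definition is_support (S : set Omega) :=
  [/\ measurable S,
      (forall A, annihilating A -> P (S `\` A) = 0%E) &
      (forall B, measurable B ->
         (forall A, annihilating A -> P (B `\` A) = 0%E) -> P (B `\` S) = 0%E)].

Definition seminorm (p : E -> Omega -> R) :=
  [/\ (forall x, L0_meas (p x)),
      (forall x, ale (cst 0) (p x)),
      (forall r x, L0_meas r -> aeq (p (smul r x)) (fun w => `|r w| * p x w)) &
      (forall x y, ale (p (x + y)) (p x \+ p y))].

Definition sn_mem (PP : set (E -> Omega -> R)) (q : E -> Omega -> R) :=
  exists2 p, PP p & forall x, aeq (p x) (q x).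

Definition glue_sn (A : nat -> set Omega) (p : nat -> E -> Omega -> R) :
  E -> Omega -> R := fun x => glue A (fun k => p k x).

Definition stable_coll (PP : set (E -> Omega -> R)) :=
  PP !=set0 /\
  forall (A : nat -> set Omega) (p : nat -> E -> Omega -> R),
    mpartition A -> (forall k, PP (p k)) -> sn_mem PP (glue_sn A p).

Definition is_esssup (F : set (Omega -> R)) (s : Omega -> R) :=
  [/\ L0_meas s, (forall f, F f -> ale f s) &
      (forall g, L0_meas g -> (forall f, F f -> ale f g) -> ale s g)].

(* sup_{p in PP} p(x) = 0 for nonnegative p's means every p(x) = 0 a.e. *)
Definition separated (PP : set (E -> Omega -> R)) :=
  forall x, (forall p, PP p -> aeq (p x) (cst 0)) -> x = 0.

Definition st_of (N0 : set (E -> Omega -> R)) : set (E -> Omega -> R) :=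
  [set q | exists B p, [/\ mpartition B, (forall j, N0 (p j)) & q = glue_sn B p]].

Definition stable_finite_of (A : nat -> set Omega)
  (Nk : nat -> set (E -> Omega -> R)) : set (E -> Omega -> R) :=
  [set q | exists qk, (forall k, st_of (Nk k) (qk k)) /\ q = glue_sn A qk].

Definition stable_finite_data (PP : set (E -> Omega -> R)) (A : nat -> set Omega)
  (Nk : nat -> set (E -> Omega -> R)) :=
  [/\ mpartition A, (forall k, finite_set (Nk k)),
      (forall k, Nk k !=set0) & (forall k, Nk k `<=` PP)].

Definition sball (N : set (E -> Omega -> R)) (x : E) (r : Omega -> R) : set E :=
  [set y | exists2 s, is_esssup [set q (x - y) | q in N] s & alt s r].

Definition Ts_open (PP : set (E -> Omega -> R)) (U : set E) :=
  forall y, U y -> exists x A Nk r,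
    [/\ stable_finite_data PP A Nk, L0_meas r, alt (cst 0) r,
        sball (stable_finite_of A Nk) x r y &
        sball (stable_finite_of A Nk) x r `<=` U].

Definition Ts_compact (PP : set (E -> Omega -> R)) (K : set E) :=
  forall (I : Type) (U : I -> set E), (forall i, Ts_open PP (U i)) ->
    K `<=` \bigcup_i U i ->
    exists J : set I, finite_set J /\ K `<=` \bigcup_(i in J) U i.

Definition anti_compact (PP : set (E -> Omega -> R)) :=
  forall K : set E, Ts_compact PP K -> finite_set K.

Definition stable_lc_module (PP : set (E -> Omega -> R)) :=
  [/\ L0module, stable_module, (forall p, PP p -> seminorm p),
      stable_coll PP & separated PP].

End Module.

Definition is_atom (B : set Omega) :=
  [/\ measurable B, (0 < P B)%E &
      forall C, measurable C -> C `<=` B -> P C = 0%E \/ P C = P B].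

Definition atomless (S : set Omega) :=
  ~ exists B, B `<=` S /\ is_atom B.

End L0.

From Pilot Require Import Defs.
From mathcomp Require Import all_boot all_order all_algebra.
From mathcomp Require Import all_classical all_reals all_analysis.
From mathcomp Require Import lra.
Set Implicit Arguments. Unset Strict Implicit. Unset Printing Implicit Defensive.
Import Order.TTheory GRing.Theory Num.Theory.
Local Open Scope classical_set_scope.
Local Open Scope ring_scope.
Local Notation glue := Defs.glue.

(* Atomless => anti-compact.  Given a point x and a sequence (u_n), separatedness
   yields seminorms p_n with p_n(x - u_n) > 0 on sets F_n of positive measure,
   which lie in supp(E) up to null sets.  If supp(E) is atomless, the F_n can be
   shrunk to pairwise disjoint sets A_n of positive measure; gluing the p_n along
   the A_n gives a single basic ball around x, of radius p_n(x - u_n)/2 on A_n,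
   containing no u_n other than x.  So an injective sequence in a compact set
   cannot exist.
   Anti-compact => atomless.  If B is an atom in supp(E), some 1_B x0 is nonzero.
   On an atom every L^0 function is a.e. bounded and every a.e. positive one is
   a.e. bounded away from 0, so 1_B x0 / n -> 0 and {0} together with this
   sequence is an infinite compact set. *)

Section L0Module.
Context {d : measure_display} {Omega : measurableType d} {R : realType}
  {P : probability Omega R} {E : zmodType} {smul : (Omega -> R) -> E -> E}.
Hypothesis HL0 : L0module P smul.

Let mcst (c : R) : L0_meas (cst c : Omega -> R) := measurable_cst c.

Lemma smul0 x : smul (cst 0) x = 0.
Proof.
case: HL0 => _ smulDl _ _ _.
have := smulDl (cst 0) (cst 0) x (mcst 0) (mcst 0).
have -> : cst 0 \+ cst 0 = cst 0 :> (Omega -> R) by apply/funext => w /=; rewrite addr0.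
by move=> h; apply: (addrI (smul (cst 0) x)); rewrite addr0 -h.
Qed.

Lemma smulr0 r : L0_meas r -> smul r 0 = 0.
Proof.
case: HL0 => smulDr _ _ _ _ mr.
by have := smulDr r 0 0 mr; rewrite addr0 => h; apply: (addrI (smul r 0)); rewrite addr0 -h.
Qed.

Lemma smul_cstB a b x : smul (cst (a - b)) x = smul (cst a) x - smul (cst b) x.
Proof.
case: HL0 => _ smulDl _ _ _; apply/eqP; rewrite eq_sym subr_eq -smulDl //; apply/eqP.
by congr (smul _ x); apply/funext => w /=; rewrite subrK.
Qed.

Lemma smulN1 x : smul (cst (-1)) x = - x.
Proof. by case: HL0 => _ _ _ smul1 _; rewrite -[-1]sub0r smul_cstB smul0 smul1 sub0r. Qed.

Lemma smul_indicC (A : set Omega) x : measurable A ->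
  smul (\1_A) x + smul (\1_(~` A)) x = x.
Proof.
case: HL0 => _ smulDl _ smul1 _ mA.
have mI := @measurable_realfun.measurable_indic _ Omega R setT.
rewrite -smulDl; [|exact: mI|exact/mI/measurableC].
rewrite -[RHS]smul1; congr (smul _ x); apply/funext => w /=; rewrite !indicE.
have [Aw|Aw] := pselect (A w).
  by rewrite mem_set // memNset //= addr0.
by rewrite memNset // mem_set //= add0r.
Qed.

Lemma smul_cst_inj z : z <> 0 -> injective (fun c : R => smul (cst c) z).
Proof.
case: HL0 => _ _ smulM smul1 _ z0 a b /= /eqP.
rewrite -subr_eq0 -smul_cstB => /eqP hab; apply/eqP; rewrite -subr_eq0.
apply: contra_notT z0 => ab0; rewrite -[z]smul1.
have -> : cst 1 = cst (a - b)^-1 \* cst (a - b) :> (Omega -> R).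
  by apply/funext => w /=; rewrite mulVf.
by rewrite smulM // hab smulr0.
Qed.

Section Seminorm.
Variable p : E -> Omega -> R.
Hypothesis hp : seminorm P smul p.

Lemma sn_meas x : L0_meas (p x). Proof. by case: hp. Qed.
Lemma sn_ge0 x : ale P (cst 0) (p x). Proof. by case: hp. Qed.
Lemma sn_smul r x : L0_meas r -> aeq P (p (smul r x)) (fun w => `|r w| * p x w).
Proof. by case: hp => _ _ + _; apply. Qed.
Lemma sn_tri x y : ale P (p (x + y)) (p x \+ p y). Proof. by case: hp. Qed.

Lemma sn0 : aeq P (p 0) (cst 0).
Proof.
have := sn_smul 0 (mcst 0); rewrite smul0.
by apply: filterS => w /= ->; rewrite normr0 mul0r.
Qed.

Lemma snN x : aeq P (p (- x)) (p x).
Proof.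
have := sn_smul x (mcst (-1)); rewrite smulN1.
by apply: filterS => w /= ->; rewrite normrN normr1 mul1r.
Qed.

Lemma sn_tri_sub x y z : ale P (p (x - z)) (p (x - y) \+ p (y - z)).
Proof.
have -> : x - z = (x - y) + (y - z) by rewrite addrA subrK.
exact: sn_tri.
Qed.

Lemma sn_indic (A : set Omega) x : measurable A ->
  aeq P (p (smul (\1_A) x)) (fun w => \1_A w * p x w).
Proof.
move=> mA; apply: filterS (sn_smul x (measurable_realfun.measurable_indic mA)) => w ->.
by rewrite ger0_norm // indicE; case: (_ \in _).
Qed.

Lemma sn_sub_scaled_indic (A : set Omega) c x y : measurable A -> 0 <= c ->
  ale P (p (x - smul (cst c) (smul (\1_A) y))) (fun w => p x w + c * (\1_A w * p y w)).
Proof.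
move=> mA c0.
set z := smul (\1_A) y.
apply: filterS (filterI (sn_tri x (- smul (cst c) z)) (filterI (snN (smul (cst c) z))
  (filterI (sn_smul z (mcst c)) (sn_indic y mA)))).
move=> w /= [+ [pN [pZ pI]]].
by rewrite pN pZ pI ger0_norm.
Qed.

End Seminorm.
End L0Module.
Section Partition.
Context {d : measure_display} {Omega : measurableType d} {R : realType}.
Implicit Types (A : nat -> set Omega) (f : nat -> Omega -> R).

Lemma mpartition_cover A w : mpartition A -> exists k, A k w.
Proof.
case=> _ [_ cov]; have : (\bigcup_k A k) w by rewrite cov.
by case=> k _ Akw; exists k.
Qed.

Lemma mpartition_uniq A k j w : mpartition A -> A k w -> A j w -> k = j.
Proof. by case=> _ [tA _] Akw Ajw; apply: tA => //; exists w. Qed.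

Lemma glueE A f k w : mpartition A -> A k w -> glue A f w = f k w.
Proof.
move=> hA Akw; rewrite /Defs.glue (@xget_unique _ 0%N _ k) //.
by move=> j /= Ajw; apply: mpartition_uniq hA Ajw Akw.
Qed.

Lemma measurable_glue A f : mpartition A ->
  (forall k, L0_meas (f k)) -> L0_meas (glue A f).
Proof.
move=> hA mf _ Y mY; rewrite setTI.
have -> : glue A f @^-1` Y = \bigcup_k (A k `&` (setT `&` f k @^-1` Y)).
  apply/seteqP; split => w /=.
    by have [k Akw] := mpartition_cover w hA; rewrite (glueE f hA Akw) => Yw; exists k.
  by case=> k _ [Akw [_ Yw]]; rewrite (glueE f hA Akw).
apply: bigcupT_measurable => k; apply: measurableI; first by case: hA.
exact: mf.
Qed.

Definition trivial_partition : nat -> set Omega :=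
  fun k => if k is 0%N then setT else set0.

Lemma mpartition_trivial : mpartition trivial_partition.
Proof.
split; [|split].
- by case=> [|k]; [exact: measurableT|exact: measurable0].
- by move=> [|i] [|j] _ _ [w []].
- by apply/seteqP; split => // w _; exists 0%N.
Qed.

(* Index 0 collects what the family leaves uncovered. *)
Definition completion A : nat -> set Omega :=
  fun k => if k is k'.+1 then A k' else ~` \bigcup_j A j.

Lemma mpartition_completion A : (forall k, measurable (A k)) ->
  trivIset setT A -> mpartition (completion A).
Proof.
move=> mA tA; split; [|split].
- by case=> [|k] //=; apply/measurableC/bigcupT_measurable.
- move=> [|i] [|j] _ _ [w [/= Aiw Ajw]] //.
  + by case: Aiw; exists j.
  + by case: Ajw; exists i.
  + by rewrite (tA i j) //; exists w.
- apply/seteqP; split => // w _.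
  have [[j _ Ajw]|nA] := pselect ((\bigcup_j A j) w); first by exists j.+1.
  by exists 0%N.
Qed.

End Partition.

Section Seminorms.
Context {d : measure_display} {Omega : measurableType d} {R : realType}
  {P : probability Omega R} {E : zmodType} {smul : (Omega -> R) -> E -> E}.
Local Notation seminorm := (seminorm P smul).

Lemma seminorm_max p q : seminorm p -> seminorm q ->
  seminorm (fun x w => Num.max (p x w) (q x w)).
Proof.
move=> [mp p0 pZ pD] [mq q0 qZ qD]; split.
- by move=> x; exact: measurable_realfun.measurable_maxr (mp x) (mq x).
- by move=> x; apply: filterS (p0 x) => w /= pw; rewrite le_max pw.
- move=> r x mr; apply: filterS2 (pZ r x mr) (qZ r x mr) => w -> ->.
  by rewrite maxr_pMr.
- move=> x y; apply: filterS2 (pD x y) (qD x y) => w /= pxy qxy.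
  rewrite ge_max; apply/andP; split.
    by apply: le_trans pxy _; apply: lerD; rewrite le_max lexx.
  by apply: le_trans qxy _; apply: lerD; rewrite le_max lexx orbT.
Qed.

Lemma seminorm_bigmax (s : seq (E -> Omega -> R)) :
  (forall p, p \in s -> seminorm p) ->
  seminorm (fun x w => \big[Num.max/0]_(p <- s) p x w).
Proof.
elim: s => [_|p s IHs hs].
  have -> : (fun x w => \big[Num.max/0]_(p <- [::]) p x w) = fun (_ : E) (_ : Omega) => 0 :> R.
    by apply/funext => x; apply/funext => w; rewrite big_nil.
  split=> [x|x|r x _|x y]; [exact: measurable_cst| | |]; 
  by apply: aeW => w /=; rewrite ?mulr0 ?addr0.
have -> : (fun x w => \big[Num.max/0]_(q <- p :: s) q x w) =
    fun x w => Num.max (p x w) (\big[Num.max/0]_(q <- s) q x w).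
  by apply/funext => x; apply/funext => w; rewrite big_cons.
apply: seminorm_max; first by apply: hs; rewrite mem_head.
by apply: IHs => q sq; apply: hs; rewrite in_cons sq orbT.
Qed.

Lemma seminorm_glue A (p : nat -> E -> Omega -> R) : mpartition A ->
  (forall k, seminorm (p k)) -> seminorm (glue_sn A p).
Proof.
move=> hA hp.
have glueA (Q : Omega -> R -> R -> Prop) (f g : nat -> Omega -> R) :
    (forall k, {ae P, forall w, Q w (f k w) (g k w)}) ->
    {ae P, forall w, Q w (glue A f w) (glue A g w)}.
  move=> h; apply: filterS (ae_foralln h) => w hw.
  by have [k Akw] := mpartition_cover w hA; rewrite !(glueE _ hA Akw).
split.
- by move=> x; apply: measurable_glue => // k; case: (hp k).
- move=> x; apply: (glueA (fun _ a b => a <= b) (fun _ => cst 0)) => k.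
  by case: (hp k) => _ + _ _; apply.
- move=> r x mr.
  apply: (glueA (fun w a b => a = `|r w| * b)) => k.
  by case: (hp k) => _ _ + _; apply.
- move=> x y; apply: (glueA (fun w a b => a <= b) _ (fun k => p k x \+ p k y)) => k.
  by case: (hp k) => _ _ _; apply.
Qed.

Definition snmax (N : set (E -> Omega -> R)) : E -> Omega -> R :=
  fun x w => \big[Num.max/0]_(p <- finmap.enum_fset (fset_set N)) p x w.

Lemma seminorm_snmax N : finite_set N -> N `<=` seminorm -> seminorm (snmax N).
Proof.
by move=> finN hN; apply: seminorm_bigmax => p; rewrite in_fset_set // inE; apply: hN.
Qed.

Lemma snmax_ge N p x w : finite_set N -> N p -> p x w <= snmax N x w.
Proof.
by move=> finN Np; apply: le_bigmax_seq => //; rewrite in_fset_set // inE.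
Qed.

End Seminorms.

Section AlmostEverywhere.
Context {d : measure_display} {Omega : measurableType d} {R : realType}
  (P : probability Omega R).

Lemma ae_exists_in (A : set Omega) (Q : Omega -> Prop) : measurable A ->
  (0 < P A)%E -> {ae P, forall w, Q w} -> exists w, A w /\ Q w.
Proof.
move=> mA PA [N [mN N0 sub]]; apply: contrapT => nex.
have AN : A `<=` N by move=> w Aw; apply: sub => Qw; apply: nex; exists w.
by move: PA; rewrite lt_neqAle => /andP[+ _]; rewrite eq_sym -measure_le0 -N0 le_measure ?inE.
Qed.

Lemma is_esssup_unique (F : set (Omega -> R)) s1 s2 :
  is_esssup P F s1 -> is_esssup P F s2 -> aeq P s1 s2.
Proof.
case=> m1 u1 l1 [m2 u2 l2].
by apply: filterS2 (l1 _ m2 u2) (l2 _ m1 u1) => w a b; apply/le_anti; rewrite a b.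
Qed.

Lemma ae_forall_in {T : eqType} (s : seq T) (Q : T -> Omega -> Prop) :
  (forall t, t \in s -> {ae P, forall w, Q t w}) ->
  {ae P, forall w, forall t, t \in s -> Q t w}.
Proof.
elim: s => [_|t s IHs hs]; first exact: aeW.
apply: filterS2 (hs t (mem_head t s)) (IHs _) => [w Qt Qs u|u su].
  by rewrite in_cons => /orP[/eqP->|/Qs].
by apply: hs; rewrite in_cons su orbT.
Qed.

End AlmostEverywhere.

Section StableFinite.
Context {d : measure_display} {Omega : measurableType d} {R : realType}
  {P : probability Omega R} {E : zmodType} {smul : (Omega -> R) -> E -> E}.
Local Notation seminorm := (seminorm P smul).

Lemma st_of_self (N : set (E -> Omega -> R)) p : N p -> st_of N p.
Proof. by move=> Np; exists trivial_partition, (fun=> p); split=> //; exact: mpartition_trivial. Qed.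

(* A pointwise representative of ess.sup_{q in N} q for the stable finite set N
   generated by [A] and [Nk]; see [is_esssup_sfsup]. *)
Definition sfsup (A : nat -> set Omega) (Nk : nat -> set (E -> Omega -> R)) :
  E -> Omega -> R := glue_sn A (fun k => snmax (Nk k)).

Variables (A : nat -> set Omega) (Nk : nat -> set (E -> Omega -> R)).
Hypotheses (hA : mpartition A) (finN : forall k, finite_set (Nk k))
  (neN : forall k, Nk k !=set0) (semN : forall k, Nk k `<=` seminorm).

Lemma seminorm_sfsup : seminorm (sfsup A Nk).
Proof. by apply: seminorm_glue => // k; apply: seminorm_snmax. Qed.

Lemma sfsup_ge q v w : stable_finite_of A Nk q -> q v w <= sfsup A Nk v w.
Proof.
case=> qk [hqk ->]; have [k Akw] := mpartition_cover w hA.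
rewrite /sfsup /glue_sn !(glueE _ hA Akw).
have [B [p [hB Np ->]]] := hqk k; have [j Bjw] := mpartition_cover w hB.
by rewrite /glue_sn (glueE _ hB Bjw); exact: snmax_ge (finN k) (Np j).
Qed.

Lemma is_esssup_sfsup v :
  is_esssup P [set q v | q in stable_finite_of A Nk] (sfsup A Nk v).
Proof.
split; first by case: seminorm_sfsup.
  by move=> _ [q Nq <-]; apply: aeW => w; apply: sfsup_ge.
move=> g _ gub; have [p0 Np0] := choice neN.
pose qsel k p := glue_sn A (fun k' => if k' == k then p else p0 k').
have qselN k p : Nk k p -> stable_finite_of A Nk (qsel k p).
  move=> Np; exists (fun k' => if k' == k then p else p0 k'); split=> // k'.
  by apply: st_of_self; case: eqP => [->|].
have gub_on k p : Nk k p -> {ae P, forall w, A k w -> p v w <= g w}.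
  move=> Np; apply: filterS (gub _ (ex_intro2 _ _ _ (qselN k p Np) erefl)) => w.
  by rewrite /qsel /glue_sn => + Akw; rewrite (glueE _ hA Akw) eqxx.
have hall : {ae P, forall w, forall k, A k w -> 0 <= g w /\
    forall p, p \in finmap.enum_fset (fset_set (Nk k)) -> p v w <= g w}.
  apply: ae_foralln => k.
  have p0ge0 := sn_ge0 (semN (Np0 k)) v.
  have gall := @ae_forall_in _ _ _ P _ (finmap.enum_fset (fset_set (Nk k)))
    (fun p w => A k w -> p v w <= g w).
  have {}gall : {ae P, forall w, forall p, p \in finmap.enum_fset (fset_set (Nk k)) ->
      A k w -> p v w <= g w}.
    by apply: gall => p; rewrite in_fset_set // inE; apply: gub_on.
  apply: filterS (filterI p0ge0 (filterI (gub_on k _ (Np0 k)) gall)).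
  move=> w [/= p0w [gp0 {}gall]] Akw; split; first exact: le_trans p0w (gp0 Akw).
  by move=> p /gall; apply.
apply: filterS hall => w hw; have [k Akw] := mpartition_cover w hA.
have [g0 gp] := hw k Akw; rewrite /sfsup /glue_sn (glueE _ hA Akw).
by rewrite /snmax big_seq; apply: bigmax_le => // p /gp.
Qed.

Lemma sballE x r y :
  sball P (stable_finite_of A Nk) x r y <-> alt P (sfsup A Nk (x - y)) r.
Proof.
split=> [[s hs slt]|lt]; last by exists (sfsup A Nk (x - y)); first exact: is_esssup_sfsup.
by apply: filterS2 (is_esssup_unique hs (is_esssup_sfsup (x - y))) slt => w <-.
Qed.

End StableFinite.
Section RealProbability.
Context {d : measure_display} {Omega : measurableType d} {R : realType}
  (P : probability Omega R).

Definition Pr (A : set Omega) : R := fine (P A).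

Lemma PrE A : measurable A -> P A = (Pr A)%:E.
Proof. by move=> mA; rewrite /Pr fineK // fin_num_measure. Qed.

Lemma Pr_ge0 A : 0 <= Pr A.
Proof. by rewrite /Pr fine_ge0 // measure_ge0. Qed.

Lemma Pr_le1 A : measurable A -> Pr A <= 1.
Proof. by move=> mA; rewrite -lee_fin -PrE // probability_le1. Qed.

Lemma le_Pr A B : measurable A -> measurable B -> A `<=` B -> Pr A <= Pr B.
Proof. by move=> mA mB AB; rewrite -lee_fin -!PrE // le_measure ?inE. Qed.

Lemma Pr_gt0 A : measurable A -> (0 < P A)%E <-> 0 < Pr A.
Proof. by move=> mA; rewrite PrE // lte_fin. Qed.

Lemma PrD A B : measurable A -> measurable B -> B `<=` A -> Pr (A `\` B) = Pr A - Pr B.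
Proof.
move=> mA mB BA.
have : P (A `\` B) = (P A - P (A `&` B))%E.
  by rewrite measureD // ltey_eq fin_num_measure.
rewrite setIidr // !PrE //; last exact: measurableD.
by rewrite -EFinB => -[].
Qed.

End RealProbability.

Section LevelSets.
Context {d : measure_display} {Omega : measurableType d} {R : realType}.
Variables f g : Omega -> R.
Hypotheses (mf : L0_meas f) (mg : L0_meas g).

Lemma measurable_ler_set : measurable [set w | f w <= g w].
Proof. by rewrite -[X in measurable X]setTI; exact: measurable_fun_le. Qed.

Lemma measurable_ltr_set : measurable [set w | f w < g w].
Proof.
have -> : [set w | f w < g w] = ~` [set w | g w <= f w].
  by apply/seteqP; split => w /=; rewrite ltNge => /negP.
by apply: measurableC; rewrite -[X in measurable X]setTI; exact: measurable_fun_le.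
Qed.

End LevelSets.

Section Atoms.
Context {d : measure_display} {Omega : measurableType d} {R : realType}
  (P : probability Omega R).

Lemma atom_ae_cover (B N : set Omega) (D : nat -> set Omega) :
  is_atom P B -> P.-negligible N -> (forall m, measurable (D m)) ->
  B `<=` N `|` \bigcup_m D m -> exists m, {ae P, forall w, B w -> D m w}.
Proof.
move=> [mB PB atomB] negN mD cover; apply: contrapT => /forallNP noae.
have mBD m : measurable (B `&` D m) by apply: measurableI.
have BD0 m : P (B `&` D m) = 0%E.
  have [//|BDB] := atomB _ (mBD m) (@subIsetl _ _ _); case: (noae m).
  have BminusD : P (B `\` (B `&` D m)) = 0%E.
    rewrite (PrE P (measurableD mB (mBD m))) (PrD P mB (mBD m) (@subIsetl _ _ _)).
    by move: BDB; rewrite !PrE // => -[->]; rewrite subrr.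
  apply: negligibleS (proj2 (negligibleP _ (measurableD mB (mBD m))) BminusD).
  by move=> w /= /not_implyP[Bw nDw]; split=> // -[].
have negB : P.-negligible B.
  apply: negligibleS (negligibleU negN (negligible_bigcup (fun m =>
    proj2 (negligibleP _ (mBD m)) (BD0 m)))).
  by move=> w Bw; case: (cover w Bw) => [Nw|[m _ Dw]]; [left|right; exists m].
by move: PB; rewrite (measure_negligible mB negB) ltxx.
Qed.

Lemma atom_ae_bounded (B : set Omega) (f : Omega -> R) : is_atom P B ->
  L0_meas f -> exists M : R, {ae P, forall w, B w -> f w <= M}.
Proof.
move=> atomB mf.
have cover : B `<=` set0 `|` \bigcup_m [set w | f w <= m%:R].
  move=> w _; right; exists (Num.Def.archi_bound `|f w|) => //=.
  exact: ltW (le_lt_trans (ler_norm _) (archi_boundP (normr_ge0 _))).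
have [m hm] := atom_ae_cover atomB (negligible_set0 P)
  (fun m => measurable_ler_set mf (measurable_cst _)) cover.
by exists m%:R.
Qed.

Lemma atom_ae_bounded_below (B : set Omega) (f : Omega -> R) : is_atom P B ->
  L0_meas f -> {ae P, forall w, B w -> 0 < f w} ->
  exists2 eps : R, 0 < eps & {ae P, forall w, B w -> eps <= f w}.
Proof.
move=> atomB mf fpos.
have cover : B `<=` ~` [set w | B w -> 0 < f w] `|`
    \bigcup_m [set w | (m.+1%:R)^-1 <= f w].
  move=> w Bw; have [fw0|fw0] := ltP 0 (f w); last by left => /(_ Bw); rewrite ltNge fw0.
  right; exists (Num.Def.archi_bound (f w)^-1) => //=.
  rewrite -[X in _ <= X]invrK lef_pV2 ?posrE ?invr_gt0 //.
  have fi : 0 <= (f w)^-1 by rewrite invr_ge0 ltW.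
  by apply: ltW (lt_le_trans (archi_boundP fi) _); rewrite ler_nat.
have [m hm] := atom_ae_cover atomB fpos
  (fun m => measurable_ler_set (measurable_cst _) mf) cover.
by exists (m.+1%:R)^-1; rewrite ?invr_gt0.
Qed.

End Atoms.

Section FastDecreasing.
Context {d : measure_display} {Omega : measurableType d} {R : realType}
  (P : probability Omega R).
Local Notation Pr := (Pr P).
Variable c : nat -> set Omega.
Hypotheses (mc : forall n, measurable (c n))
  (fast : forall n, Pr (c n.+1) * 2 ^+ n.+3 < Pr (c n)).

Definition tail k : set Omega := \bigcup_j (if (k < j)%N then c j else set0).

Lemma measurable_tail k : measurable (tail k).
Proof. by apply: bigcupT_measurable => j; case: ifP. Qed.

Lemma Pr_fast_decreasing k j : (k < j)%N -> Pr (c j) * 2 ^+ j.+2 <= Pr (c k).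
Proof.
elim: j => // j IHj; rewrite ltnS leq_eqVlt => /orP[/eqP <-|kj]; first exact: ltW.
apply: le_trans (IHj kj); apply: ltW; apply: lt_le_trans (fast j) _.
by rewrite ler_peMr ?Pr_ge0 // exprn_ege1 // ler1n.
Qed.

Lemma Pr_tail k : Pr (tail k) <= Pr (c k) / 2.
Proof.
have mF j : measurable (if (k < j)%N then c j else set0) by case: ifP.
rewrite -lee_fin -(PrE P (measurable_tail k)).
apply: le_trans (measure_sigma_subadditive P mF (measurable_tail k) _) _ => //.
have eps0 : 0 <= Pr (c k) / 2 by rewrite divr_ge0 ?Pr_ge0.
apply: le_trans _ (epsilon_trick0 xpredT eps0).
apply: lee_nneseries => [i _ _|j _]; first exact: measure_ge0.
case: ifP => kj; last by rewrite measure0 lee_fin !divr_ge0 ?Pr_ge0.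
rewrite /= (PrE P (mc j)) lee_fin natrX -[X in _ <= X]mulrA -invfM -exprS ler_pdivlMr ?exprn_gt0 //.
exact: Pr_fast_decreasing.
Qed.

End FastDecreasing.

Section Atomless.
Context {d : measure_display} {Omega : measurableType d} {R : realType}
  (P : probability Omega R) (S : set Omega).
Hypothesis atomlessS : atomless P S.
Local Notation Pr := (Pr P).

Lemma atomless_halve C : measurable C -> C `<=` S -> 0 < Pr C ->
  exists D, [/\ measurable D, D `<=` C, 0 < Pr D & Pr D <= Pr C / 2].
Proof.
move=> mC CS PC.
have /not_and3P[/(_ mC)//|/(_ (proj2 (Pr_gt0 P mC) PC))//|] : ~ is_atom P C.
  by move=> atomC; apply: atomlessS; exists C.
move=> /existsNP[D /not_implyP[mD /not_implyP[DC /not_orP[PD0 PDC]]]].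
have PD : 0 < Pr D.
  by rewrite lt_neqAle Pr_ge0 andbT; apply: contra_notN PD0 => /eqP PD; rewrite PrE // -PD.
have PDlt : Pr D < Pr C.
  by rewrite lt_neqAle le_Pr // andbT; apply: contra_notN PDC => /eqP PDC; rewrite !PrE // PDC.
have [PDhalf|PDhalf] := leP (Pr D) (Pr C / 2); first by exists D.
exists (C `\` D); split; [exact: measurableD|exact: subDsetl|..];
  rewrite PrD //; lra.
Qed.

Lemma atomless_small_subset G (eps : R) : measurable G -> G `<=` S -> 0 < Pr G ->
  0 < eps -> exists C, [/\ measurable C, C `<=` G, 0 < Pr C & Pr C < eps].
Proof.
move=> mG GS PG eps0.
have halves m : exists C, [/\ measurable C, C `<=` G, 0 < Pr C & Pr C <= Pr G / 2 ^+ m].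
  elim: m => [|m [C [mC CG PC PCle]]]; first by exists G; split; rewrite // expr0 divr1.
  have [D [mD DC PD PDle]] := atomless_halve mC (subset_trans CG GS) PC.
  exists D; split=> //; first exact: subset_trans DC CG.
  by move: PDle PCle; rewrite exprS invfM; set t := (2 ^+ m)^-1; lra.
pose m := Num.Def.archi_bound eps^-1.
have [C [mC CG PC PCle]] := halves m; exists C; split=> //.
apply: le_lt_trans PCle _; rewrite ltr_pdivrMr ?exprn_gt0 //.
apply: le_lt_trans (Pr_le1 P mG) _; rewrite -ltr_pdivrMl // mulr1.
apply: lt_le_trans (archi_boundP _) _; first by rewrite invr_ge0 ltW.
by rewrite -natrX ler_nat ltnW // ltn_expl.
Qed.

Lemma atomless_fast_decreasing_subsets (G : nat -> set Omega) :
  (forall n, measurable (G n)) -> (forall n, G n `<=` S) -> (forall n, 0 < Pr (G n)) ->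
  exists c : nat -> set Omega, [/\ forall n, measurable (c n), forall n, c n `<=` G n,
    forall n, 0 < Pr (c n) & forall n, Pr (c n.+1) * 2 ^+ n.+3 < Pr (c n)].
Proof.
move=> mG GS PG.
have small_n n : exists f : R -> set Omega, forall eps, 0 < eps ->
    [/\ measurable (f eps), f eps `<=` G n, 0 < Pr (f eps) & Pr (f eps) < eps].
  suff /choice[f hf] : forall eps : R, exists C, 0 < eps ->
    [/\ measurable C, C `<=` G n, 0 < Pr C & Pr C < eps] by exists f.
  move=> eps; have [eps0|] := ltP 0 eps; last by exists set0.
  by have [C hC] := atomless_small_subset (mG n) (GS n) (PG n) eps0; exists C.
have [small hsmall] := choice small_n.
pose c := fix c n := if n is m.+1 then small n (Pr (c m) / 2 ^+ m.+3) else small 0%N 1.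
have hc n : [/\ measurable (c n), c n `<=` G n & 0 < Pr (c n)].
  elim: n => [|n [_ _ Pcn]]; first by have [] := hsmall 0%N 1 ltr01.
  by have [] := hsmall n.+1 (Pr (c n) / 2 ^+ n.+3); rewrite ?divr_gt0 ?exprn_gt0.
exists c; split=> n; try by case: (hc n).
have [_ _ Pcn] := hc n.
have [] := hsmall n.+1 (Pr (c n) / 2 ^+ n.+3); rewrite ?divr_gt0 ?exprn_gt0 //.
by move=> _ _ _; rewrite ltr_pdivlMr ?exprn_gt0.
Qed.

Lemma atomless_disjoint_subsets (G : nat -> set Omega) :
  (forall n, measurable (G n)) -> (forall n, G n `<=` S) -> (forall n, 0 < Pr (G n)) ->
  exists A : nat -> set Omega, [/\ forall n, measurable (A n), forall n, A n `<=` G n,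
    forall n, 0 < Pr (A n) & trivIset setT A].
Proof.
move=> mG GS PG.
have [c [mc cG Pc fast]] := atomless_fast_decreasing_subsets mG GS PG.
exists (fun k => c k `\` tail c k); split=> [k|k|k|].
- exact: measurableD (mc k) (measurable_tail mc k).
- by move=> w [/cG].
- have mT := measurable_tail mc k.
  have PT := Pr_tail mc fast k.
  have : Pr (c k `&` tail c k) <= Pr (tail c k).
    exact: le_Pr (measurableI _ _ (mc k) mT) mT (@subIsetr _ _ _).
  have -> : c k `\` tail c k = c k `\` (c k `&` tail c k) by rewrite setDIr setDv set0U.
  by rewrite PrD //; [have := Pc k; lra|exact: measurableI].
- move=> i j _ _ [w [[ciw Tiw] [cjw Tjw]]]; apply/eqP; apply: contra_notT Tiw.
  case: (ltngtP i j) => [ij _|ji _|->//]; last by exfalso; apply: Tjw; exists i; rewrite ?ji.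
  by exists j; rewrite ?ij.
Qed.

End Atomless.

Lemma infinite_set_injseq (T : Type) (K : set T) : infinite_set K ->
  exists u : nat -> T, injective u /\ range u `<=` K.
Proof.
move/infiniteP/card_leP => [f].
pose u n := \val (f (exist _ n (mem_set (I : setT n)))).
exists u; split; last by move=> _ [n _ <-]; exact: set_valP.
by move=> m n /val_inj/(@inj _ _ _ f) => /(_ (mem_set I) (mem_set I)) [].
Qed.

Lemma injseq_infinite (T : Type) (u : nat -> T) : injective u -> infinite_set (range u).
Proof.
move=> uinj /(finite_preimage (fun m n _ _ => uinj m n)).
have -> : u @^-1` range u = setT by apply/seteqP; split=> // n _; exists n.
exact: infinite_nat.
Qed.

Section Compactness.
Context {d : measure_display} {Omega : measurableType d} {R : realType}
  (P : probability Omega R) (E : zmodType) (PP : set (E -> Omega -> R)).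

Lemma anti_compact_of_isolating :
  (forall (x : E) (u : nat -> E),
    exists U, [/\ Ts_open P PP U, U x & forall n, U (u n) -> u n = x]) ->
  anti_compact P PP.
Proof.
move=> isolate K Kc; apply: contrapT => /infinite_set_injseq[u [uinj uK]].
have [Ux hUx] := choice (fun x => isolate x u).
have [J [finJ cover]] : exists J, finite_set J /\ K `<=` \bigcup_(x in J) Ux x.
  apply: Kc => [x|x _]; first by case: (hUx x).
  by exists x => //; case: (hUx x).
apply: (injseq_infinite uinj); apply: sub_finite_set finJ => _ [n _ <-].
have [j Jj Ujun] := cover _ (uK _ (ex_intro2 _ _ n I erefl)).
by have [_ _ ->] := hUx j.
Qed.

Lemma Ts_compact_cvg (u : nat -> E) (l : E) :
  (forall U, Ts_open P PP U -> U l -> exists m0, forall m, (m0 <= m)%N -> U (u m)) ->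
  Ts_compact P PP (l |` range u).
Proof.
move=> cvg Idx U openU cover.
have [i0 _ Ui0l] := cover l (or_introl erefl).
have [m0 hm0] := cvg _ (openU i0) Ui0l.
have hiu m : exists i, U i (u m).
  by have [i _ Ui] := cover (u m) (or_intror (ex_intro2 _ _ m I erefl)); exists i.
have [iu {}hiu] := choice hiu.
exists (i0 |` [set iu m | m in `I_m0]); split.
  by rewrite finite_setU; split; [exact: finite_set1|exact/finite_image/finite_II].
move=> _ [->|[m _ <-]]; first by exists i0; [left|].
have [m0m|mm0] := leqP m0 m; first by exists i0; [left|exact: hm0].
by exists (iu m) => //; right; exists m.
Qed.

End Compactness.

Section StableLocallyConvexModule.
Context {d : measure_display} {Omega : measurableType d} {R : realType}
  {P : probability Omega R} {E : zmodType} {smul : (Omega -> R) -> E -> E}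
  {PP : set (E -> Omega -> R)} {S : set Omega}.
Hypotheses (HLC : stable_lc_module P smul PP) (HS : is_support P smul S).
Local Notation seminorm := (seminorm P smul).

Let HL0 : L0module P smul. Proof. by case: HLC. Qed.
Let semPP : PP `<=` seminorm. Proof. by case: HLC. Qed.

Section Balls.
Variables (A : nat -> set Omega) (Nk : nat -> set (E -> Omega -> R)).
Hypothesis sfd : stable_finite_data PP A Nk.
Local Notation N := (stable_finite_of A Nk).

Let semN k : Nk k `<=` seminorm.
Proof. by case: sfd => _ _ _ NPP p /NPP/semPP. Qed.

Lemma seminorm_sfd_sup : seminorm (sfsup A Nk).
Proof. by case: sfd => hA finN _ _; exact: seminorm_sfsup hA finN semN. Qed.

Lemma sfd_sballE x r y : sball P N x r y <-> alt P (sfsup A Nk (x - y)) r.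
Proof. by case: sfd => hA finN neN _; exact: sballE hA finN neN semN x r y. Qed.

Lemma sball_center x r : alt P (cst 0) r -> sball P N x r x.
Proof.
move=> r0; apply/sfd_sballE; rewrite subrr.
by apply: filterS2 (sn0 HL0 seminorm_sfd_sup) r0 => w /= ->.
Qed.

Lemma Ts_open_sball x r : L0_meas r -> Ts_open P PP (sball P N x r).
Proof.
move=> mr y /sfd_sballE yx; pose s := sfsup A Nk (x - y).
have ms : L0_meas s := sn_meas seminorm_sfd_sup (x - y).
exists y, A, Nk, (r \- s); split=> //.
- exact: measurable_realfun.measurable_funB.
- by apply: filterS yx => w; rewrite /= subr_gt0.
- by apply: sball_center; apply: filterS yx => w; rewrite /= subr_gt0.
move=> z /sfd_sballE zy; apply/sfd_sballE.
apply: filterS (filterI (sn_tri_sub seminorm_sfd_sup x y z) zy) => w /= [xz zy'].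
by apply: le_lt_trans xz _; rewrite -ltrBrDl.
Qed.

End Balls.

Lemma sn_supported p v : PP p -> P ([set w | 0 < p v w] `\` S) = 0%E.
Proof.
move=> /semPP hp; have mF := measurable_ltr_set (measurable_cst (0 : R)) (sn_meas hp v).
case: HS => _ _ maxS; apply: (maxS _ mF) => A [mA annA].
have vA : smul (\1_A) v = v by rewrite -[RHS](smul_indicC HL0 v mA) annA addr0.
have := sn_indic hp v mA; rewrite vA => hv.
apply/(negligibleP _ (measurableD mF mA)); apply: negligibleS hv => w [/= pos nA].
by rewrite indicE memNset // mul0r => pv0; move: pos; rewrite pv0 ltxx.
Qed.

Lemma separating_seminorm v : v <> 0 ->
  exists2 p, PP p & (0 < P (S `&` [set w | (0 < p v w)%R]))%E.
Proof.
move=> v0; have [_ _ _ _ sep] := HLC.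
have /existsNP[p /not_implyP[Pp pv0]] : ~ forall p, PP p -> aeq P (p v) (cst 0).
  by move=> h; apply: v0; apply: sep.
have hp := semPP Pp; have mF := measurable_ltr_set (measurable_cst (0 : R)) (sn_meas hp v).
have mS : measurable S by case: HS.
exists p => //; rewrite setIC.
have -> : P ([set w | 0 < p v w] `&` S) = P [set w | 0 < p v w].
  by rewrite [RHS](measureDI P mF mS) /= (sn_supported v Pp) add0e.
rewrite lt0e measure_ge0 andbT; apply/negP => /eqP F0; apply: pv0.
have nF : {ae P, forall w, ~ 0 < p v w}.
  by apply: negligibleS (proj2 (negligibleP _ mF) F0) => w /= /contrapT.
apply: filterS2 (sn_ge0 hp v) nF => w /= pv pvpos.
by apply/le_anti; rewrite pv andbT leNgt; apply/negP.
Qed.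

Lemma atom_support_nonzero B : B `<=` S -> is_atom P B ->
  exists x0, smul (\1_B) x0 <> 0.
Proof.
move=> BS [mB PB _]; apply: contrapT => /forallNP B0.
have annB : annihilating smul (~` B).
  by split=> [|x]; [exact: measurableC|rewrite setCK; exact: contrapT (B0 x)].
case: HS => _ minS _; have := minS _ annB.
by rewrite setDE setCK setIidr // => PB0; move: PB; rewrite PB0 ltxx.
Qed.

(* On the atom [B] the radius of a basic ball around [0] exceeds the seminorm
   of its centre by a constant, and the seminorm of [x0] is bounded. *)
Lemma atom_scaled_cvg B x0 : is_atom P B ->
  forall U, Ts_open P PP U -> U 0 ->
  exists m0, forall m, (m0 <= m)%N -> U (smul (cst (m.+1%:R)^-1) (smul (\1_B) x0)).
Proof.
move=> atomB U openU U0; have [mB _ _] := atomB.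
have [c0 [A [Nk [r [sfd mr _ c0ball ballU]]]]] := openU 0 U0.
have semsup := seminorm_sfd_sup sfd; pose sup := sfsup A Nk.
move/(sfd_sballE sfd): c0ball; rewrite subr0 => c0r.
have [eps eps0 heps] : exists2 eps : R, 0 < eps &
    {ae P, forall w, B w -> eps <= r w - sup c0 w}.
  apply: atom_ae_bounded_below atomB (measurable_realfun.measurable_funB mr (sn_meas semsup c0)) _.
  by apply: filterS c0r => w /= lt _; rewrite subr_gt0.
have [M hM] := atom_ae_bounded atomB (sn_meas semsup x0).
pose M' := Num.max M 0.
have M'0 : 0 <= M' by rewrite le_max lexx orbT.
exists (Num.Def.archi_bound (M' / eps)) => m m0m; apply: ballU; apply/(sfd_sballE sfd).
set c : R := (m.+1%:R)^-1; have c0' : 0 <= c by rewrite invr_ge0.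
have cM : c * M' < eps.
  rewrite /c mulrC ltr_pdivrMr // mulrC -ltr_pdivrMr //.
  by apply: lt_le_trans (archi_boundP (divr_ge0 M'0 (ltW eps0))) _; rewrite ler_nat ltnW.
apply: filterS (filterI (sn_sub_scaled_indic HL0 semsup c0 x0 mB c0')
  (filterI heps (filterI hM c0r))) => w /= [+ [epsw [Mw rw]]].
move/le_lt_trans; apply; have [Bw|nBw] := pselect (B w); last first.
  by rewrite indicE memNset // mul0r mulr0 addr0.
rewrite indicE mem_set // mul1r.
have : c * sup x0 w <= c * M' by rewrite ler_wpM2l // le_max (Mw Bw).
rewrite /sup in epsw *.
by have := epsw Bw; lra.
Qed.

Lemma anti_compact_atomless : anti_compact P PP -> atomless P S.
Proof.
move=> antiK [B [BS atomB]]; have [x0 Bx0] := atom_support_nonzero BS atomB.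
pose y m := smul (cst (m.+1%:R)^-1) (smul (\1_B) x0).
have yinj : injective y.
  move=> m n /(smul_cst_inj HL0 Bx0) /(congr1 GRing.inv).
  by rewrite !invrK => /eqP; rewrite eqr_nat eqSS => /eqP.
apply: (injseq_infinite yinj); apply: sub_finite_set (antiK _ (Ts_compact_cvg _)).
  by move=> _ [m _ <-]; right; exists m.
exact: atom_scaled_cvg.
Qed.

Hypothesis HSpos : (0 < P S)%E.

Lemma separating_sequence x (u : nat -> E) :
  exists (p : nat -> E -> Omega -> R) (F : nat -> set Omega),
  [/\ forall n, PP (p n), forall n, measurable (F n), forall n, F n `<=` S,
      forall n, 0 < Pr P (F n) &
      forall n, u n <> x -> forall w, F n w -> 0 < p n (x - u n) w].
Proof.
have mS : measurable S by case: HS.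
have pick n : exists pF : (E -> Omega -> R) * set Omega,
    [/\ PP pF.1, measurable pF.2, pF.2 `<=` S, 0 < Pr P pF.2 &
         u n <> x -> forall w, pF.2 w -> 0 < pF.1 (x - u n) w].
  have [->|unx] := pselect (u n = x).
    have [_ _ _ [[p0 Pp0] _] _] := HLC.
    by exists (p0, S); split=> //; exact/(Pr_gt0 P mS).
  have [|p Pp PF] := @separating_seminorm (x - u n).
    by move=> /eqP; rewrite subr_eq0 => /eqP xun; apply: unx.
  have mF : measurable (S `&` [set w | 0 < p (x - u n) w]).
    exact/measurableI/measurable_ltr_set/(sn_meas (semPP Pp))/measurable_cst.
  exists (p, S `&` [set w | 0 < p (x - u n) w]); split=> //=.
  - exact/(Pr_gt0 P mF).
  - by move=> _ w [].
have [pF hpF] := choice pick.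
by exists (fun n => (pF n).1), (fun n => (pF n).2); split=> n; case: (hpF n).
Qed.

Lemma isolating_nbhd : atomless P S -> forall x (u : nat -> E),
  exists U, [/\ Ts_open P PP U, U x & forall n, U (u n) -> u n = x].
Proof.
move=> atomlessS x u.
have [p [F [Pp mF FS PF Fpos]]] := separating_sequence x u.
have [A [mA AF PA tA]] := atomless_disjoint_subsets atomlessS mF FS PF.
have hA := mpartition_completion mA tA.
pose pk k := if k is n.+1 then p n else p 0%N.
have sfd : stable_finite_data PP (completion A) (fun k => [set pk k]).
  by split=> // k; [exists (pk k)|move=> q ->; case: k => *; exact: Pp].
pose rk k : Omega -> R := if k is n.+1 then
  (if `[< u n = x >] then cst 1 else fun w => p n (x - u n) w / 2) else cst 1.
pose r := glue (completion A) rk.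
have mr : L0_meas r.
  apply: measurable_glue => // -[|n] /=; first exact: measurable_cst.
  case: asboolP => _; first exact: measurable_cst.
  exact: measurable_realfun.measurable_funM (sn_meas (semPP (Pp n)) _) (measurable_cst _).
have r0 w : 0 < r w.
  have [[|n] Akw] := mpartition_cover w hA; rewrite /r (glueE _ hA Akw) //=.
  by case: asboolP => // unx; rewrite divr_gt0 // Fpos //; apply: AF.
exists (sball P (stable_finite_of (completion A) (fun k => [set pk k])) x r); split.
- exact: Ts_open_sball.
- by apply: sball_center => //; exact: aeW.
move=> n /(sfd_sballE sfd) ux; apply: contrapT => unx.
have [w [Anw ltw]] := ae_exists_in (mA n) (proj2 (Pr_gt0 P (mA n)) (PA n)) ux.
have pos := Fpos n unx w (AF n w Anw).
have : p n (x - u n) w <= sfsup (completion A) (fun k => [set pk k]) (x - u n) w.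
  by rewrite /sfsup /glue_sn (glueE _ hA (k := n.+1)) //; exact: snmax_ge (finite_set1 _) _.
move: ltw; rewrite /r (glueE _ hA (k := n.+1)) //= asboolF //; lra.
Qed.

Lemma atomless_anti_compact : atomless P S -> anti_compact P PP.
Proof. by move=> atomlessS; apply: anti_compact_of_isolating; exact: isolating_nbhd. Qed.

End StableLocallyConvexModule.

Theorem proposition5p2 (d : measure_display) (Omega : measurableType d)
  (R : realType) (P : probability Omega R)
  (E : zmodType) (smul : (Omega -> R) -> E -> E)
  (PP : set (E -> Omega -> R)) (S : set Omega) :
  stable_lc_module P smul PP ->
  is_support P smul S ->
  (0 < P S)%E ->
  (anti_compact P PP <-> atomless P S).
Proof.
move=> HLC HS HSpos.
by split; [exact: anti_compact_atomless HLC HS|exact: atomless_anti_compact HLC HS HSpos].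
Qed.
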